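(* Let $A$ be a finite abelian group of order $n$ and let $k\in\mathbb{N}$. Then there is a natural number $\alpha$ depending only on $n$ and $k$ such that for every $i\geq 1$, every morphism $\phi:\mathcal{D}_i(\mathbb{Z})\rightarrow\mathcal{D}_k(A)$ is $n^\alpha$-periodic, i.e. $\phi(x+n^\alpha)=\phi(x)$ for all $x\in\mathbb{Z}$.
   Context: A cube morphism $\{0,1\}^m\rightarrow\{0,1\}^l$ is a map extending to an affine homomorphism $\mathbb{Z}^m\rightarrow\mathbb{Z}^l$. For an abelian group $G$ and $k\in\mathbb{N}$, $\mathcal{D}_k(G)$ is $G$ with cube sets $C^m(\mathcal{D}_k(G))$ consisting of those $f:\{0,1\}^m\rightarrow G$ with $\sum_{v\in\{0,1\}^{k+1}}(-1)^{v_1+\dots+v_{k+1}}f(\psi(v))=0$ for every cube morphism $\psi:\{0,1\}^{k+1}\rightarrow\{0,1\}^m$. A morphism is a map $g$ such that $g\circ c$ is a cube of the target for every cube $c$ of the source. *)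

From HB Require Import structures.
From mathcomp Require Import all_boot all_order all_algebra.
Set Implicit Arguments. Unset Strict Implicit. Unset Printing Implicit Defensive.
Import Order.TTheory GRing.Theory Num.Theory.
Local Open Scope ring_scope.

Notation bcube m := {ffun 'I_m -> bool}.

(* A cube morphism {0,1}^m -> {0,1}^l: a map that extends to an affine
   homomorphism Z^m -> Z^l, i.e. v |-> b + M v for some b in Z^l and some
   integer l x m matrix M. *)
Definition cube_morphism (m l : nat) (psi : bcube m -> bcube l) : Prop :=
  exists (b : 'I_l -> int) (M : 'I_l -> 'I_m -> int),
    forall (v : bcube m) (j : 'I_l),
      ((nat_of_bool (psi v j))%:Z) = b j + \sum_(i < m) M j i * (nat_of_bool (v i))%:Z.

Definition is_cube (G : zmodType) (k m : nat) (f : bcube m -> G) : Prop :=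
  forall psi : bcube k.+1 -> bcube m, cube_morphism psi ->
    \sum_(v : bcube k.+1)
       (f (psi v)) *~ ((-1) ^+ (\sum_(i < k.+1) nat_of_bool (v i))%N) = 0.

Definition D_morphism (G H : zmodType) (i k : nat) (g : G -> H) : Prop :=
  forall (m : nat) (c : bcube m -> G), is_cube i c -> is_cube k (g \o c).

From HB Require Import structures.
From mathcomp Require Import all_boot all_order all_algebra.
From mathcomp Require fingroup cyclic.
Set Implicit Arguments. Unset Strict Implicit. Unset Printing Implicit Defensive.
Import Order.TTheory GRing.Theory Num.Theory.
Local Open Scope ring_scope.

(* The map v |-> y + |v| from {0,1}^(k+1) to Z is affine, so it is a cube of
   D_i(Z) for every i >= 1.  Its image under a morphism phi into D_k(A) is
   therefore a cube, and the defining relation for the identity cube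
   morphism says that the alternating sum of phi along it, which is
   +-(k+1)-th finite difference of phi at y, vanishes.  A function Z -> A
   whose d-th difference vanishes is n^d-periodic when n kills A: if the
   difference of f is P-periodic, then f (y + P) - f y is a constant c, so
   f (x + n P) = f x + n c = f x. *)

Definition bcount d (v : bcube d) : nat := (\sum_(i < d) nat_of_bool (v i))%N.

Definition bcons d (b : bool) (w : bcube d) : bcube d.+1 :=
  [ffun i => if unlift ord0 i is Some j then w j else b].

Arguments bcount {d}.
Arguments bcons {d}.

Lemma bcons0 d b (w : bcube d) : bcons b w ord0 = b.
Proof. by rewrite ffunE unlift_none. Qed.

Lemma bconsS d b (w : bcube d) j : bcons b w (lift ord0 j) = w j.
Proof. by rewrite ffunE liftK. Qed.

Lemma bcount_cons d b (w : bcube d) : bcount (bcons b w) = (b + bcount w)%N.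
Proof.
rewrite /bcount big_ord_recl bcons0; congr (_ + _)%N.
by apply: eq_bigr => j _; rewrite bconsS.
Qed.

Lemma sum_bcubeS (G : zmodType) d (F : bcube d.+1 -> G) :
  \sum_(v : bcube d.+1) F v =
  \sum_(w : bcube d) (F (bcons false w) + F (bcons true w)).
Proof.
rewrite (reindex (fun p : bool * bcube d => bcons p.1 p.2)); last first.
  apply: onW_bij; exists (fun v : bcube d.+1 => (v ord0, [ffun j => v (lift ord0 j)])).
    move=> [b w] /=; rewrite bcons0; congr pair.
    by apply/ffunP => j; rewrite ffunE bconsS.
  move=> v /=; apply/ffunP => i; rewrite ffunE.
  by case: unliftP => [j ->|->]; rewrite ?ffunE.
rewrite -(pair_big xpredT xpredT (fun b w => F (bcons b w))) /= big_bool /=.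
by rewrite addrC -big_split.
Qed.

Lemma alt_sum_bcubeS (G : zmodType) d (F : bcube d.+1 -> G) :
  \sum_(v : bcube d.+1) F v *~ ((-1) ^+ bcount v) =
  \sum_(w : bcube d) (F (bcons false w) - F (bcons true w)) *~ ((-1) ^+ bcount w).
Proof.
rewrite sum_bcubeS; apply: eq_bigr => w _.
by rewrite !bcount_cons add0n add1n exprS mulN1r mulrNz mulrzBl.
Qed.

Lemma alt_sum_affine_eq0 e (C : int) (N : 'I_e.+2 -> int) :
  \sum_(v : bcube e.+2)
     (C + \sum_l N l * (nat_of_bool (v l))%:Z) *~ ((-1) ^+ bcount v) = 0.
Proof.
have lin_cons d (M : 'I_d.+1 -> int) b (w : bcube d) :
    \sum_l M l * (nat_of_bool (bcons b w l))%:Z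
    = M ord0 * (nat_of_bool b)%:Z
      + \sum_j M (lift ord0 j) * (nat_of_bool (w j))%:Z.
  rewrite big_ord_recl bcons0; congr (_ + _).
  by apply: eq_bigr => j _; rewrite bconsS.
rewrite alt_sum_bcubeS.
under eq_bigr => w _.
  rewrite !lin_cons mulr0 mulr1 add0r opprD addrACA subrr add0r.
  rewrite opprD addrCA subrr addr0.
  over.
by rewrite alt_sum_bcubeS big1 // => w _; rewrite subrr mul0rz.
Qed.

Lemma bcount_is_cube i d (y : int) :
  is_cube i.+1 (fun v : bcube d => y + (bcount v)%:Z).
Proof.
move=> psi [b [M psiE]].
rewrite -[RHS](alt_sum_affine_eq0 (y + \sum_j b j) (fun l => \sum_j M j l)).
apply: eq_bigr => v _; congr (_ *~ _).
rewrite /bcount (big_morph Posz PoszD (erefl 0%:Z)) -addrA; congr (_ + _).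
rewrite (eq_bigr _ (fun j _ => psiE v j)) big_split /=; congr (_ + _).
by rewrite exchange_big /=; apply: eq_bigr => l _; rewrite mulr_suml.
Qed.

Lemma cube_morphism_id m : cube_morphism (@id (bcube m)).
Proof.
exists (fun _ => 0), (fun j i => (j == i)%:R) => v j.
rewrite add0r (bigD1 j) //= eqxx mul1r big1 ?addr0 // => i /negbTE.
by rewrite eq_sym => ->; rewrite mul0r.
Qed.

Definition fdiff (A : zmodType) (f : int -> A) (x : int) : A := f (x + 1) - f x.

Definition diag_alt_sum (A : zmodType) d (f : int -> A) (x : int) : A :=
  \sum_(v : bcube d) f (x + (bcount v)%:Z) *~ ((-1) ^+ bcount v).

Arguments fdiff {A}.
Arguments diag_alt_sum {A}.

Lemma diag_alt_sum0 (A : zmodType) (f : int -> A) x : diag_alt_sum 0 f x = f x.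
Proof.
rewrite /diag_alt_sum (big_pred1 [ffun => false]); last first.
  by move=> v /=; apply/esym/eqP/ffunP => -[].
by rewrite /bcount big_ord0 addr0.
Qed.

Lemma diag_alt_sumS (A : zmodType) d (f : int -> A) x :
  diag_alt_sum d.+1 f x = - diag_alt_sum d (fdiff f) x.
Proof.
rewrite /diag_alt_sum alt_sum_bcubeS -sumrN; apply: eq_bigr => w _.
rewrite !bcount_cons add0n add1n /fdiff -mulNrz opprB.
by rewrite -addn1 PoszD addrA.
Qed.

Lemma D_morphism_diag_alt_sum (A : zmodType) i k (phi : int -> A) :
  D_morphism i.+1 k phi -> forall y, diag_alt_sum k.+1 phi y = 0.
Proof.
move=> phiD y.
exact: phiD _ _ (@bcount_is_cube i k.+1 y) id (cube_morphism_id _).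
Qed.

Lemma int_shift1_const (A : Type) (h : int -> A) :
  (forall x, h (x + 1) = h x) -> forall x, h x = h 0.
Proof.
move=> h1.
have hD x (m : nat) : h (x + m%:Z) = h x.
  by elim: m => [|m IHm]; rewrite ?addr0 // -addn1 PoszD addrA h1.
case=> m; first by rewrite -(hD 0 m) add0r.
by rewrite -(hD (Negz m) m.+1) NegzE addNr.
Qed.

Section Periodicity.

Variables (A : zmodType) (n : nat).
Hypothesis n_kills : forall a : A, a *+ n = 0.

Lemma periodic_of_fdiff_periodic (f : int -> A) (P : nat) :
  (forall y, fdiff f (y + P%:Z) = fdiff f y) ->
  forall x, f (x + (P * n)%N%:Z) = f x.
Proof.
move=> dfP x; pose c y := f (y + P%:Z) - f y.
have cE y : c y = c 0.
  apply: int_shift1_const => {}y; have := dfP y.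
  rewrite /c /fdiff (addrAC y 1) => E.
  rewrite -[f (y + P%:Z + 1)](subrK (f (y + P%:Z))) E.
  by rewrite addrAC (addrAC (f _)) subrr add0r addrC.
have fPm (m : nat) : f (x + (P * m)%N%:Z) = f x + c 0 *+ m.
  elim: m => [|m IHm]; first by rewrite muln0 addr0 addr0.
  rewrite mulnS addnC PoszD addrA mulrSr addrA -IHm -(cE (x + (P * m)%N%:Z)).
  by rewrite /c addrCA subrr addr0.
by rewrite fPm n_kills addr0.
Qed.

Lemma periodic_of_diag_alt_sum_eq0 d (f : int -> A) :
  (forall y, diag_alt_sum d f y = 0) -> forall x, f (x + (n ^ d)%N%:Z) = f x.
Proof.
elim: d f => [|d IHd] f fd0 x.
  by rewrite -(diag_alt_sum0 f) -(diag_alt_sum0 f x) !fd0.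
rewrite expnSr; apply: periodic_of_fdiff_periodic => y; apply: IHd => z.
by apply/eqP; rewrite -oppr_eq0 -diag_alt_sumS fd0.
Qed.

End Periodicity.

Lemma finZmod_mulr_card (A : finZmodType) (a : A) : a *+ #|A| = 0.
Proof.
rewrite -FinRing.zmodXgE -cardsT.
exact: (@cyclic.expg_cardG (FinRing.Zmodule_to_finGroup A)
          (fingroup.setT_group _) a (in_setT _)).
Qed.

Theorem mainTheorem7 (n k : nat) :
  exists alpha : nat,
    forall (A : finZmodType), #|A| = n ->
    forall (i : nat), (1 <= i)%N ->
    forall (phi : int -> A), D_morphism i k phi ->
    forall x : int, phi (x + ((n ^ alpha)%N)%:Z) = phi x.
Proof.
exists k.+1 => A cardA [//|i] _ phi phiD.
apply: periodic_of_diag_alt_sum_eq0 (D_morphism_diag_alt_sum phiD).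
by move=> a; rewrite -cardA finZmod_mulr_card.
Qed.
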